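(* Let $R$ be an associative ring with identity and $a,b\in R$. If $ab\in R^{\dagger}$, then $ba\in R^{\dagger}$ and $(ba)^{\dagger}=b\big((ab)^{\dagger}\big)^2a$.
   Context: For $x\in R$, $\mathrm{comm}(x)=\{y\in R : xy=yx\}$ and $\mathrm{comm}^2(x)=\{y\in R : yz=zy \text{ for all } z\in\mathrm{comm}(x)\}$. $R^{rad}$ is the Jacobson radical of $R$. An element $x$ has a p-Drazin (pseudo Drazin) inverse if there is $y\in R$ with $y=yxy$, $y\in\mathrm{comm}^2(x)$ and $x^k-x^{k+1}y\in R^{rad}$ for some $k\in\mathbb{N}$; such $y$ is unique and denoted $x^{\dagger}$; $R^{\dagger}$ is the set of such $x$. *)

From HB Require Import structures.
From mathcomp Require Import all_boot all_order all_algebra.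
Set Implicit Arguments. Unset Strict Implicit. Unset Printing Implicit Defensive.
Import GRing.Theory.
Local Open Scope ring_scope.

(* u is a (two-sided) unit of R, stated without requiring a unitRing structure. *)
Definition is_unit_el (R : pzRingType) (u : R) : Prop :=
  exists v : R, v * u = 1 /\ u * v = 1.

Definition commutant (R : pzRingType) (x : R) : R -> Prop :=
  fun y => x * y = y * x.

Definition dcommutant (R : pzRingType) (x : R) : R -> Prop :=
  fun y => forall z : R, commutant x z -> y * z = z * y.

(* Membership in the Jacobson radical R^rad, via the standard elementwise
   characterization: x \in J(R) iff 1 - r x is a unit for every r \in R. *)
Definition in_jacobson (R : pzRingType) (x : R) : Prop :=
  forall r : R, is_unit_el (1 - r * x).

Definition is_pdrazin_inv (R : pzRingType) (x y : R) : Prop :=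
  [/\ y = y * x * y, dcommutant x y &
      exists k : nat, in_jacobson (x ^+ k - x ^+ k.+1 * y)].

Definition has_pdrazin (R : pzRingType) (x : R) : Prop :=
  exists y : R, is_pdrazin_inv x y.

From mathcomp Require Import all_boot all_order all_algebra.
Import GRing.Theory.
Local Open Scope ring_scope.

(* The three defining
   properties of z are checked separately, each reduced to a property of y
   by moving the outer factors b, a across:
   - reflexivity  z (ba) z = z  follows from y^2 (ab) = (ab) y^2 = y;
   - z lies in comm^2(ba): an element t commuting with ba yields a t b
     commuting with ab, hence with y^3, and z t = t z follows by writing
     y^2 = y^3 (ab) and shuttling t through;
   - (ba)^(k+1) - (ba)^(k+2) z = b ((ab)^k - (ab)^(k+1) y) a, and the
     Jacobson radical is stable under such sandwiching, which is Jacobson's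
     lemma "1 - uv invertible implies 1 - vu invertible". *)

(* Jacobson's lemma: if 1 - uv is a unit with inverse c, then 1 - vu is a
   unit with inverse 1 + vcu. *)
Lemma jacobson_unit (R : pzRingType) (u v : R) :
  is_unit_el (1 - u * v) -> is_unit_el (1 - v * u).
Proof.
case=> c [cK Kc]; exists (1 + v * c * u); split.
- have e : v * (c * (1 - u * v)) * u = v * u by rewrite cK mulr1.
  rewrite !(mulrBr, mulrBl, mulr1, mul1r) !mulrA in e.
  by rewrite mulrDl mul1r mulrBr mulr1 !mulrA e subrK.
- have e : v * ((1 - u * v) * c) * u = v * u by rewrite Kc mulr1.
  rewrite !(mulrBr, mulrBl, mulr1, mul1r) !mulrA in e.
  by rewrite mulrDr mulr1 mulrBl mul1r !mulrA e subrK.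
Qed.

Lemma jacobson_sandwich (R : pzRingType) (a b w : R) :
  in_jacobson w -> in_jacobson (b * w * a).
Proof.
move=> Jw r; rewrite !mulrA; apply: (@jacobson_unit R a (r * b * w)).
by rewrite !mulrA; apply: Jw.
Qed.

Lemma exprS_swap (R : pzRingType) (a b : R) (n : nat) :
  (b * a) ^+ n.+1 = b * (a * b) ^+ n * a.
Proof.
elim: n => [|n IH]; first by rewrite expr1 expr0 mulr1.
by rewrite exprS IH exprS !mulrA.
Qed.

Lemma commutant_swap (R : pzRingType) (a b t : R) :
  commutant (b * a) t -> commutant (a * b) (a * t * b).
Proof.
rewrite /commutant => ct.
by rewrite !mulrA -(mulrA a b a) -(mulrA a) ct !mulrA.
Qed.

Section InnerInverse.
Context {R : pzRingType} {x y : R}.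
Hypotheses (yxy : y = y * x * y) (cxy : x * y = y * x).

Lemma sqr_mulr : y ^+ 2 * x = y.
Proof. by rewrite expr2 -mulrA -cxy mulrA -yxy. Qed.

Lemma mulr_sqr : x * y ^+ 2 = y.
Proof. by rewrite expr2 mulrA cxy -yxy. Qed.

Lemma sqr_cube : y ^+ 2 = y ^+ 3 * x.
Proof. by rewrite [y ^+ 3]exprS -mulrA sqr_mulr expr2. Qed.

Lemma mulr_cube : x * y ^+ 3 = y ^+ 2.
Proof. by rewrite exprSr mulrA mulr_sqr expr2. Qed.

End InnerInverse.

Section Cline.
Variables (R : pzRingType) (a b y : R).
Hypothesis hy : is_pdrazin_inv (a * b) y.

Let yxy : y = y * (a * b) * y.
Proof. by move: hy; rewrite /is_pdrazin_inv => -[]. Qed.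
Let dcy : dcommutant (a * b) y.
Proof. by move: hy; rewrite /is_pdrazin_inv => -[]. Qed.
Let cxy : (a * b) * y = y * (a * b).
Proof. by apply/esym/dcy; rewrite /commutant. Qed.

Lemma cline_reflexive :
  b * y ^+ 2 * a = b * y ^+ 2 * a * (b * a) * (b * y ^+ 2 * a).
Proof.
have -> : b * y ^+ 2 * a * (b * a) * (b * y ^+ 2 * a)
        = b * (y ^+ 2 * (a * b) * ((a * b) * y ^+ 2)) * a by rewrite !mulrA.
by rewrite (sqr_mulr yxy cxy) (mulr_sqr yxy cxy) expr2.
Qed.

Lemma cline_dcommutant : dcommutant (b * a) (b * y ^+ 2 * a).
Proof.
move=> t ct; have cbt : b * a * t = t * (b * a) := ct.
(* y^3 commutes with a t b, since y does and a t b commutes with ab. *)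
have cy3 : y ^+ 3 * (a * t * b) = a * t * b * y ^+ 3.
  have cy : GRing.comm y (a * t * b) by apply/dcy/commutant_swap.
  exact/commr_sym/commrX/commr_sym.
(* Move t to the right of y^3 using y^2 = y^3 (ab) and t (ba) = (ba) t. *)
have right : b * y ^+ 2 * a * t = b * (y ^+ 3 * (a * t * b)) * a.
  rewrite (sqr_cube yxy cxy).
  by move: (congr1 (fun w => b * y ^+ 3 * a * w) cbt); rewrite !mulrA.
(* Move t to the left of y^3 using (ab) y^3 = y^2 and (ba) t = t (ba). *)
have left : b * (a * t * b * y ^+ 3) * a = t * (b * y ^+ 2 * a).
  rewrite -(mulr_cube yxy cxy).
  by move: (congr1 (fun w => w * (b * y ^+ 3 * a)) cbt); rewrite !mulrA.
by rewrite right cy3 left.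
Qed.

Lemma cline_radical (k : nat) :
  in_jacobson ((a * b) ^+ k - (a * b) ^+ k.+1 * y) ->
  in_jacobson ((b * a) ^+ k.+1 - (b * a) ^+ k.+2 * (b * y ^+ 2 * a)).
Proof.
move=> J; suff -> : (b * a) ^+ k.+1 - (b * a) ^+ k.+2 * (b * y ^+ 2 * a)
    = b * ((a * b) ^+ k - (a * b) ^+ k.+1 * y) * a by exact: jacobson_sandwich.
rewrite !(@exprS_swap R a b).
have -> : b * (a * b) ^+ k.+1 * a * (b * y ^+ 2 * a)
        = b * ((a * b) ^+ k.+1 * ((a * b) * y ^+ 2)) * a by rewrite !mulrA.
by rewrite (mulr_sqr yxy cxy) mulrBr mulrBl.
Qed.

Lemma cline_pdrazin : is_pdrazin_inv (b * a) (b * y ^+ 2 * a).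
Proof.
case: hy => _ _ [k J]; split.
- exact: cline_reflexive.
- exact: cline_dcommutant.
- by exists k.+1; apply: cline_radical.
Qed.

End Cline.

Theorem corollary3p3 (R : pzRingType) (a b : R) :
  has_pdrazin (a * b) ->
  has_pdrazin (b * a) /\
  (forall y : R, is_pdrazin_inv (a * b) y ->
     is_pdrazin_inv (b * a) (b * y ^+ 2 * a)).
Proof.
case=> y hy; split; last exact: cline_pdrazin.
by exists (b * y ^+ 2 * a); apply: cline_pdrazin.
Qed.
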